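(* Let $M$ and $N$ be conical monoids, $I$ an order-ideal of $M$, and $\varphi\colon I\to\varphi(I)$ a monoid isomorphism onto an order-ideal $\varphi(I)$ of $N$. Let $P=(M\times N)/\!\sim$, where $\sim$ is the monoid congruence on $M\times N$ generated by the pairs $((s,0),(0,\varphi(s)))$, $s\in I$, and define $\iota_1\colon M\to P$, $\iota_1(x)=[(x,0)]$, and $\iota_2\colon N\to P$, $\iota_2(y)=[(0,y)]$. Then: (1) $\iota_1,\iota_2$ form a pushout of the diagram $M\hookleftarrow I\xrightarrow{\varphi}N$ in the category of monoids; (2) $\iota_1$ and $\iota_2$ are injective; (3) $I'=\iota_1(I)=\iota_2(\varphi(I))$ is an order-ideal of $P$ and $P/I'\cong M/I\times N/\varphi(I)$; (4) if $Q$ is a conical refinement monoid and $\theta_1\colon M\to Q$, $\theta_2\colon N\to Q$ are injective monoid homomorphisms with $\theta_1|_I=\theta_2\circ\varphi$, $\theta_1(M)\cap\theta_2(N)=\theta_1(I)=\theta_2(\varphi(I))$, and $\theta_1(M),\theta_2(N)$ order-ideals of $Q$, then there is an injective monoid homomorphism $\iota\colon P\to Q$ with $\theta_i=\iota\circ\iota_i$ for $i=1,2$.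
   Context: Monoids are abelian. A monoid is conical if $x+y=0$ implies $x=y=0$. An order-ideal of $M$ is a nonempty $I\subseteq M$ with $x+y\in I\iff x,y\in I$. For an order-ideal $I$, $M/I$ is the quotient by the congruence $x\equiv y\iff x+u=y+v$ for some $u,v\in I$. A refinement monoid is one in which every $x_1+x_2=y_1+y_2$ admits $x_{ij}$ with $x_i=x_{i1}+x_{i2}$, $y_j=x_{1j}+x_{2j}$. *)

From Stdlib Require Import Classical ClassicalEpsilon FunctionalExtensionality
  PropExtensionality ProofIrrelevance.

Set Implicit Arguments.
Unset Strict Implicit.

Record cmonoid := CMonoid {
  carrier :> Type;
  mzero : carrier;
  madd : carrier -> carrier -> carrier;
  maddA : forall x y z, madd x (madd y z) = madd (madd x y) z;
  maddC : forall x y, madd x y = madd y x;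
  madd0 : forall x, madd x mzero = x
}.
Arguments mzero {c}.
Arguments madd {c}.
Arguments maddA {c}.
Arguments maddC {c}.
Arguments madd0 {c}.

Declare Scope mon_scope.
Delimit Scope mon_scope with mon.
Open Scope mon_scope.
Notation "x + y" := (madd x y) : mon_scope.
Notation "0" := mzero : mon_scope.

Definition is_hom (A B : cmonoid) (f : A -> B) : Prop :=
  f 0 = 0 /\ forall x y, f (x + y) = f x + f y.

Definition injective {A B : Type} (f : A -> B) : Prop :=
  forall x y, f x = f y -> x = y.

Definition bijective {A B : Type} (f : A -> B) : Prop :=
  injective f /\ forall y, exists x, f x = y.

Definition conical (M : cmonoid) : Prop :=
  forall x y : M, x + y = 0 -> x = 0 /\ y = 0.

Definition refinement (M : cmonoid) : Prop :=
  forall x1 x2 y1 y2 : M, x1 + x2 = y1 + y2 ->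
    exists x11 x12 x21 x22 : M,
      x1 = x11 + x12 /\ x2 = x21 + x22 /\ y1 = x11 + x21 /\ y2 = x12 + x22.

Definition order_ideal (M : cmonoid) (I : M -> Prop) : Prop :=
  (exists x, I x) /\ forall x y : M, I (x + y) <-> (I x /\ I y).

Definition image {A B : Type} (f : A -> B) (I : A -> Prop) : B -> Prop :=
  fun y => exists x, I x /\ f x = y.

Definition range {A B : Type} (f : A -> B) : B -> Prop :=
  fun y => exists x, f x = y.

Definition is_congruence (M : cmonoid) (E : M -> M -> Prop) : Prop :=
  (forall x, E x x) /\ (forall x y, E x y -> E y x) /\
  (forall x y z, E x y -> E y z -> E x z) /\
  (forall x y z, E x y -> E (x + z) (y + z)).

Section Quotient.
Variables (M : cmonoid) (E : M -> M -> Prop) (HE : is_congruence E).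

Definition qcar := {A : M -> Prop | exists x, A = E x}.

Definition qclass (x : M) : qcar := exist _ (E x) (ex_intro _ x eq_refl).

Definition qrep (A : qcar) : M :=
  proj1_sig (constructive_indefinite_description _ (proj2_sig A)).

Lemma qrep_spec (A : qcar) : proj1_sig A = E (qrep A).
Proof.
unfold qrep; destruct (constructive_indefinite_description _ _); assumption.
Qed.

Lemma qclass_eq x y : E x y -> qclass x = qclass y.
Proof.
destruct HE as [Hr [Hs [Ht _]]]; intro Hxy.
unfold qclass.
assert (H : E x = E y).
{ apply functional_extensionality; intro z; apply propositional_extensionality;
  split; intro H; eauto. }
apply eq_sig_hprop; [intros; apply proof_irrelevance|]. simpl; exact H.
Qed.

Lemma qclass_rep A : qclass (qrep A) = A.
Proof.
destruct A as [A HA]; unfold qclass.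
pose proof (qrep_spec (exist _ A HA)) as Hs; simpl in Hs.
apply eq_sig_hprop; [intros; apply proof_irrelevance|]. simpl; congruence.
Qed.

Lemma qrep_class x : E (qrep (qclass x)) x.
Proof.
destruct HE as [Hr [Hs _]].
pose proof (qrep_spec (qclass x)) as H; simpl in H.
apply Hs. rewrite H. apply Hr.
Qed.

Lemma addE x y x' y' : E x x' -> E y y' -> E (x + y) (x' + y').
Proof.
destruct HE as [Hr [Hs [Ht Hc]]]; intros H1 H2.
apply (Ht _ (madd x' y)); [apply Hc; auto|].
rewrite (maddC x' y), (maddC x' y'); apply Hc; auto.
Qed.

Definition qadd (A B : qcar) : qcar := qclass (qrep A + qrep B).

Lemma qadd_class x y : qadd (qclass x) (qclass y) = qclass (x + y).
Proof. apply qclass_eq, addE; apply qrep_class. Qed.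

Lemma qind (P : qcar -> Prop) : (forall x, P (qclass x)) -> forall A, P A.
Proof. intros H A; rewrite <- (qclass_rep A); apply H. Qed.

Lemma qaddA : forall A B C, qadd A (qadd B C) = qadd (qadd A B) C.
Proof.
intros A B C; revert A; apply qind; intro x; revert B; apply qind; intro y;
revert C; apply qind; intro z.
rewrite !qadd_class, maddA; reflexivity.
Qed.

Lemma qaddC : forall A B, qadd A B = qadd B A.
Proof.
intros A B; revert A; apply qind; intro x; revert B; apply qind; intro y.
rewrite !qadd_class, maddC; reflexivity.
Qed.

Lemma qadd0 : forall A, qadd A (qclass 0) = A.
Proof.
apply qind; intro x; rewrite qadd_class, madd0; reflexivity.
Qed.

Definition quot_monoid : cmonoid :=
  @CMonoid qcar (qclass 0) qadd qaddA qaddC qadd0.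

End Quotient.

Section Product.
Variables M N : cmonoid.
Definition padd (p q : M * N) : M * N := (fst p + fst q, snd p + snd q).
Lemma paddA p q r : padd p (padd q r) = padd (padd p q) r.
Proof. destruct p, q, r; unfold padd; simpl; rewrite !maddA; reflexivity. Qed.
Lemma paddC p q : padd p q = padd q p.
Proof. destruct p, q; unfold padd; simpl; rewrite (maddC c), (maddC c0); reflexivity. Qed.
Lemma padd0 p : padd p (0, 0) = p.
Proof. destruct p; unfold padd; simpl; rewrite !madd0; reflexivity. Qed.
Definition prod_monoid : cmonoid := @CMonoid (M * N) (0, 0) padd paddA paddC padd0.
End Product.

Inductive gen_cong (M : cmonoid) (R : M -> M -> Prop) : M -> M -> Prop :=
| gc_base x y : R x y -> gen_cong R x y
| gc_refl x : gen_cong R x x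
| gc_sym x y : gen_cong R x y -> gen_cong R y x
| gc_trans x y z : gen_cong R x y -> gen_cong R y z -> gen_cong R x z
| gc_add x y z : gen_cong R x y -> gen_cong R (x + z) (y + z).

Lemma gen_cong_is_congruence (M : cmonoid) (R : M -> M -> Prop) :
  is_congruence (gen_cong R).
Proof.
repeat split; [apply gc_refl | apply gc_sym | apply gc_trans | apply gc_add].
Qed.

Definition ideal_rel (M : cmonoid) (I : M -> Prop) (x y : M) : Prop :=
  exists u v, I u /\ I v /\ x + u = y + v.

Lemma ideal_rel_congruence (M : cmonoid) (I : M -> Prop) :
  order_ideal I -> is_congruence (ideal_rel I).
Proof.
intros [[a Ha] HI]; repeat split.
- intro x; exists a, a; auto.
- intros x y [u [v [Hu [Hv H]]]]; exists v, u; auto.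
- intros x y z [u [v [Hu [Hv H]]]] [u' [v' [Hu' [Hv' H']]]].
  exists (u + u'), (v' + v); repeat split; try (apply HI; auto).
  rewrite maddA, H, <- maddA, (maddC v u'), maddA, H', <- maddA.
  reflexivity.
- intros x y z [u [v [Hu [Hv H]]]]; exists u, v; repeat split; auto.
  rewrite <- !maddA, (maddC z u), (maddC z v), !maddA, H; reflexivity.
Qed.

Definition ideal_quot (M : cmonoid) (I : M -> Prop) (HI : order_ideal I)
  : cmonoid := quot_monoid (ideal_rel_congruence HI).

Section Pushout.
Variables (M N : cmonoid) (I : M -> Prop) (phi : M -> N).

Definition push_gen (p q : prod_monoid M N) : Prop :=
  exists s, I s /\ p = (s, 0) /\ q = (0, phi s).

Definition push_cong : prod_monoid M N -> prod_monoid M N -> Prop :=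
  gen_cong push_gen.

Definition pushout : cmonoid :=
  quot_monoid (gen_cong_is_congruence push_gen).

Definition iota1 (x : M) : pushout := qclass push_cong ((x, 0) : prod_monoid M N).
Definition iota2 (y : N) : pushout := qclass push_cong ((0, y) : prod_monoid M N).
End Pushout.

(** Every element of [P] is a class
    [[x, y] = iota1 x + iota2 y], and [[x + s, y] = [x, phi s + y]] for [s ∈ I].

    - (1) Compatible homomorphisms [f], [g] descend to the copairing
      [[x, y] |-> f x + g y]; uniqueness holds since [P] is generated by
      the images of [iota1] and [iota2].
    - (2) Injectivity of [iota1] (resp. [iota2]) follows by copairing the
      identity with the extension of [phi^-1] (resp. [phi]) by an absorbing
      element outside [J] (resp. [I]): this is a homomorphism because [J]
      (resp. [I]) is an order-ideal, and it recovers [x] from [iota1 x].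
    - (3) The copairing [P -> M/I × N/J] of the two quotient maps has kernel
      [I' = iota1(I)], which is therefore an order-ideal, and it induces an
      isomorphism [P/I' -> M/I × N/J].
    - (4) The copairing of [th1] and [th2] is injective: refining an equality
      [th1 x + th2 y = th1 x' + th2 y'] exhibits [(x, y)] and [(x', y')] as
      [(m + s1, phi s2 + n)] and [(m + s2, phi s1 + n)] with [s1, s2 ∈ I],
      which are equivalent by moving [s1], [s2] across. *)

From Stdlib Require Import ClassicalEpsilon.
Set Implicit Arguments.
Unset Strict Implicit.

Lemma madd0l (X : cmonoid) (a : X) : 0 + a = a.
Proof. rewrite maddC; apply madd0. Qed.

Lemma madd_swap (X : cmonoid) (a b c d : X) : (a + b) + (c + d) = (a + c) + (b + d).
Proof. rewrite <- !maddA; f_equal; rewrite !maddA; f_equal; apply maddC. Qed.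

(** An order-ideal contains 0, since [x = x + 0]. *)
Lemma order_ideal_0 (X : cmonoid) (K : X -> Prop) : order_ideal K -> K 0.
Proof. intros [[a Ha] HK]; apply (HK a 0); rewrite madd0; exact Ha. Qed.

Section QuotientLift.
Variables (M Q : cmonoid) (E : M -> M -> Prop).
Hypothesis HE : is_congruence E.

Definition qlift (f : M -> Q) (A : qcar E) : Q := f (qrep A).

Lemma qlift_class (f : M -> Q) :
  (forall x y, E x y -> f x = f y) -> forall x, qlift f (qclass E x) = f x.
Proof. intros Hf x; apply Hf, (qrep_class HE). Qed.

Lemma qlift_hom (f : M -> Q) :
  (forall x y, E x y -> f x = f y) -> is_hom f ->
  @is_hom (quot_monoid HE) Q (qlift f).
Proof.
intros Hf [Hf0 HfD]; split.
- simpl; rewrite (qlift_class Hf); exact Hf0.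
- intros A B; revert A; apply qind; intro x; revert B; apply qind; intro y.
  simpl; rewrite (qadd_class HE), !(qlift_class Hf); apply HfD.
Qed.

Lemma qclass_inv x y : qclass E x = qclass E y -> E x y.
Proof.
intro H; apply (f_equal (@proj1_sig _ _)) in H; simpl in H; rewrite H.
destruct HE as [Hr _]; apply Hr.
Qed.

Lemma qclass_surj (A : qcar E) : exists x, A = qclass E x.
Proof. exists (qrep A); symmetry; apply qclass_rep. Qed.

End QuotientLift.

(** The monoid [X ∪ {∞}] with an absorbing element [None]; it serves as a
    codomain detecting when an element leaves an order-ideal. *)
Section Absorbing.
Variable X : cmonoid.

Definition oadd (a b : option X) : option X :=
  match a, b with Some x, Some y => Some (x + y) | _, _ => None end.

Lemma oaddA a b c : oadd a (oadd b c) = oadd (oadd a b) c.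
Proof. destruct a, b, c; simpl; auto; rewrite maddA; auto. Qed.

Lemma oaddC a b : oadd a b = oadd b a.
Proof. destruct a, b; simpl; auto; rewrite maddC; auto. Qed.

Lemma oadd0 a : oadd a (Some 0) = a.
Proof. destruct a; simpl; auto; rewrite madd0; auto. Qed.

Definition opt_monoid : cmonoid := CMonoid oaddA oaddC oadd0.

Lemma Some_hom : @is_hom X opt_monoid (@Some X).
Proof. split; reflexivity. Qed.

(** A map [k] additive on an order-ideal [K] of [A] extends to a
    homomorphism [A -> opt_monoid] sending the complement of [K] to [None]:
    this works because [K] is closed under sums and summands. *)
Variables (A : cmonoid) (K : A -> Prop) (k : A -> X).

Definition extend_absorbing (a : A) : opt_monoid :=
  if excluded_middle_informative (K a) then Some (k a) else None.

Lemma extend_absorbing_in a : K a -> extend_absorbing a = Some (k a).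
Proof. intro H; unfold extend_absorbing; destruct excluded_middle_informative; tauto. Qed.

Lemma extend_absorbing_hom :
  order_ideal K -> k 0 = 0 -> (forall a b, K a -> K b -> k (a + b) = k a + k b) ->
  is_hom extend_absorbing.
Proof.
intros HK Hk0 HkD; split.
- rewrite extend_absorbing_in by (apply order_ideal_0; exact HK); rewrite Hk0; reflexivity.
- intros a b; unfold extend_absorbing.
  pose proof (proj2 HK a b) as Hab.
  destruct (excluded_middle_informative (K (a + b)));
  destruct (excluded_middle_informative (K a));
  destruct (excluded_middle_informative (K b)); simpl;
  try (rewrite HkD by assumption); first [reflexivity | tauto].
Qed.

End Absorbing.

Lemma ideal_class_0_iff (X : cmonoid) (K : X -> Prop) (HK : order_ideal K) a :
  qclass (ideal_rel K) a = qclass (ideal_rel K) 0 <-> K a.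
Proof.
split.
- intro H; destruct (qclass_inv (ideal_rel_congruence HK) H) as [u [v [Hu [Hv Huv]]]].
  assert (Hau : K (a + u)) by (rewrite Huv, madd0l; exact Hv).
  apply (proj2 HK) in Hau; tauto.
- intro Ha; apply (qclass_eq (ideal_rel_congruence HK)).
  exists 0, a; split; [exact (order_ideal_0 HK)|split; [exact Ha|]].
  rewrite madd0, madd0l; reflexivity.
Qed.

Lemma ideal_class_hom (X : cmonoid) (K : X -> Prop) (HK : order_ideal K) :
  @is_hom X (ideal_quot HK) (qclass (ideal_rel K)).
Proof. split; [reflexivity|]; intros x y; symmetry; exact (qadd_class (ideal_rel_congruence HK) x y). Qed.

Lemma inl_hom (A B C : cmonoid) (f : A -> B) :
  is_hom f -> @is_hom A (prod_monoid B C) (fun a => (f a, 0)).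
Proof.
intros [Hf0 HfD]; split; [rewrite Hf0; reflexivity|].
intros x y; rewrite HfD; simpl; unfold padd; simpl; rewrite madd0; reflexivity.
Qed.

Lemma inr_hom (A B C : cmonoid) (f : A -> C) :
  is_hom f -> @is_hom A (prod_monoid B C) (fun a => (0, f a)).
Proof.
intros [Hf0 HfD]; split; [rewrite Hf0; reflexivity|].
intros x y; rewrite HfD; simpl; unfold padd; simpl; rewrite madd0; reflexivity.
Qed.

Section Pushout.
Variables (M N : cmonoid) (I : M -> Prop) (phi : M -> N).

Notation P := (pushout I phi).
Notation cong := (push_cong I phi).
Notation J := (image phi I).
Let HP : is_congruence cong := gen_cong_is_congruence (push_gen I phi).

Definition pclass (x : M) (y : N) : P := qclass cong ((x, y) : prod_monoid M N).

Lemma pclass_surj (z : P) : exists x y, z = pclass x y.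
Proof. destruct (qclass_surj z) as [[x y] ->]; exists x, y; reflexivity. Qed.

Lemma pclass_add a b c d : pclass a b + pclass c d = pclass (a + c) (b + d).
Proof. exact (qadd_class HP ((a, b) : prod_monoid M N) (c, d)). Qed.

Lemma pclass_split x y : pclass x y = iota1 I phi x + iota2 I phi y.
Proof.
unfold iota1, iota2; fold (pclass x 0) (pclass 0 y).
rewrite pclass_add, madd0, madd0l; reflexivity.
Qed.

Lemma iota1_hom : is_hom (iota1 I phi).
Proof.
split; [reflexivity|]; intros x y; unfold iota1.
fold (pclass x 0) (pclass y 0) (pclass (x + y) 0); rewrite pclass_add, madd0; reflexivity.
Qed.

Lemma iota2_hom : is_hom (iota2 I phi).
Proof.
split; [reflexivity|]; intros x y; unfold iota2.
fold (pclass 0 x) (pclass 0 y) (pclass 0 (x + y)); rewrite pclass_add, madd0; reflexivity.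
Qed.

Lemma iota1_iota2 s : I s -> iota1 I phi s = iota2 I phi (phi s).
Proof. intro Hs; apply (qclass_eq HP), gc_base; exists s; auto. Qed.

Lemma pclass_move s a b : I s -> pclass (a + s) b = pclass a (phi s + b).
Proof.
intro Hs; rewrite !pclass_split, (proj2 iota1_hom), (proj2 iota2_hom), (iota1_iota2 Hs).
rewrite <- !maddA, (maddC (iota2 I phi (phi s))); reflexivity.
Qed.

Section Copair.
Variables (Q : cmonoid) (f : M -> Q) (g : N -> Q).
Hypotheses (Hf : is_hom f) (Hg : is_hom g) (Hfg : forall s, I s -> f s = g (phi s)).

Let fg (p : prod_monoid M N) : Q := f (fst p) + g (snd p).

Definition copair : P -> Q := qlift fg.

Let fg_hom : is_hom fg.
Proof.
destruct Hf as [Hf0 HfD], Hg as [Hg0 HgD]; split.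
- unfold fg; simpl; rewrite Hf0, Hg0, madd0; reflexivity.
- intros [a b] [c d]; unfold fg; simpl; rewrite HfD, HgD, madd_swap; reflexivity.
Qed.

Let fg_resp p q : cong p q -> fg p = fg q.
Proof.
induction 1 as [p q [s [Hs [-> ->]]] | | | | p q r _ IH]; try congruence.
- unfold fg; simpl; rewrite (proj1 Hf), (proj1 Hg), madd0, madd0l; apply Hfg, Hs.
- rewrite !(proj2 fg_hom), IH; reflexivity.
Qed.

Lemma copair_pclass x y : copair (pclass x y) = f x + g y.
Proof. exact (qlift_class HP fg_resp _). Qed.

Lemma copair_hom : is_hom copair.
Proof. exact (qlift_hom HP fg_resp fg_hom). Qed.

Lemma copair_iota1 x : copair (iota1 I phi x) = f x.
Proof. unfold iota1; fold (pclass x 0); rewrite copair_pclass, (proj1 Hg), madd0; reflexivity. Qed.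

Lemma copair_iota2 y : copair (iota2 I phi y) = g y.
Proof. unfold iota2; fold (pclass 0 y); rewrite copair_pclass, (proj1 Hf), madd0l; reflexivity. Qed.

End Copair.

Lemma pushout_hom_unique (Q : cmonoid) (h h' : P -> Q) :
  is_hom h -> is_hom h' ->
  (forall x, h (iota1 I phi x) = h' (iota1 I phi x)) ->
  (forall y, h (iota2 I phi y) = h' (iota2 I phi y)) ->
  forall z, h z = h' z.
Proof.
intros [_ Hh] [_ Hh'] H1 H2 z; destruct (pclass_surj z) as [x [y ->]].
rewrite pclass_split, Hh, Hh', H1, H2; reflexivity.
Qed.

Hypotheses (HI : order_ideal I) (HJ : order_ideal J).
Hypothesis Hphi0 : phi 0 = 0.
Hypothesis HphiD : forall s t, I s -> I t -> phi (s + t) = phi s + phi t.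
Hypothesis Hphi_inj : forall s t, I s -> I t -> phi s = phi t -> s = t.

(** The inverse of the isomorphism [phi : I -> J], extended arbitrarily. *)
Definition phi_inv (y : N) : M := epsilon (inhabits 0) (fun t => I t /\ phi t = y).

Lemma phi_inv_spec y : J y -> I (phi_inv y) /\ phi (phi_inv y) = y.
Proof. exact (epsilon_spec (inhabits 0) (fun t => I t /\ phi t = y)). Qed.

Lemma phi_inv_phi s : I s -> phi_inv (phi s) = s.
Proof.
intro Hs; destruct (phi_inv_spec (ex_intro _ s (conj Hs eq_refl))) as [Hi He].
exact (Hphi_inj Hi Hs He).
Qed.

Lemma phi_inv_hom_on_J :
  phi_inv 0 = 0 /\ forall a b, J a -> J b -> phi_inv (a + b) = phi_inv a + phi_inv b.
Proof.
split.
- rewrite <- Hphi0; apply phi_inv_phi, order_ideal_0, HI.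
- intros a b Ha Hb.
  destruct (phi_inv_spec Ha) as [Ia Pa], (phi_inv_spec Hb) as [Ib Pb].
  destruct (phi_inv_spec (proj2 (proj2 HJ a b) (conj Ha Hb))) as [Iab Pab].
  apply Hphi_inj; [exact Iab | apply (proj2 HI); auto |].
  rewrite HphiD, Pa, Pb, Pab by assumption; reflexivity.
Qed.

(** For [iota1], copair the
    inclusion [M -> opt_monoid M] with the extension of [phi_inv] by [None]
    outside [J]; this homomorphism recovers [x] from [iota1 x].  Symmetrically
    for [iota2]. *)
Lemma iota1_inj : injective (iota1 I phi).
Proof.
destruct phi_inv_hom_on_J as [Hinv0 HinvD].
pose (g := extend_absorbing J phi_inv).
assert (Hfg : forall s, I s -> Some s = g (phi s)).
{ intros s Hs; unfold g; rewrite extend_absorbing_in, phi_inv_phi by (auto; exists s; auto).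
  reflexivity. }
intros x x' Hxx'.
pose proof (f_equal (copair (Q:=opt_monoid M) (@Some M) g) Hxx') as H.
rewrite !(copair_iota1 (Some_hom M) (extend_absorbing_hom HJ Hinv0 HinvD) Hfg) in H.
injection H; auto.
Qed.

Lemma iota2_inj : injective (iota2 I phi).
Proof.
pose (f := extend_absorbing I phi).
assert (Hfg : forall s, I s -> f s = Some (phi s)).
{ intros s Hs; apply extend_absorbing_in, Hs. }
intros y y' Hyy'.
pose proof (f_equal (copair (Q:=opt_monoid N) f (@Some N)) Hyy') as H.
rewrite !(copair_iota2 (extend_absorbing_hom HI Hphi0 HphiD) (Some_hom N) Hfg) in H.
injection H; auto.
Qed.

(** Part (3).  [I' = iota1(I)] is the kernel of the natural map
    [P -> M/I × N/J], [[x, y] |-> ([x], [y])]; it is an order-ideal, and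
    the induced map [P/I' -> M/I × N/J] is an isomorphism. *)
Notation I' := (image (iota1 I phi) I).
Notation QIJ := (prod_monoid (ideal_quot HI) (ideal_quot HJ)).

Lemma I'_iota2 z : I' z <-> image (iota2 I phi) J z.
Proof.
split.
- intros [s [Hs <-]]; exists (phi s); split; [exists s; auto | symmetry; apply iota1_iota2, Hs].
- intros [y [[t [Ht <-]] <-]]; exists t; split; [exact Ht | apply iota1_iota2, Ht].
Qed.

Definition quot_pair : P -> QIJ :=
  copair (fun x => (qclass (ideal_rel I) x, 0) : QIJ) (fun y => (0, qclass (ideal_rel J) y) : QIJ).

Lemma quot_pair_pclass x y :
  quot_pair (pclass x y) = ((qclass (ideal_rel I) x, qclass (ideal_rel J) y) : QIJ).
Proof.
unfold quot_pair; rewrite copair_pclass.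
- simpl; unfold padd; simpl.
  rewrite (qadd_class (ideal_rel_congruence HI)), (qadd_class (ideal_rel_congruence HJ)), madd0, madd0l.
  reflexivity.
- apply inl_hom, ideal_class_hom.
- apply inr_hom, ideal_class_hom.
- intros s Hs; f_equal.
  + apply (ideal_class_0_iff HI), Hs.
  + symmetry; apply (ideal_class_0_iff HJ); exists s; auto.
Qed.

Lemma quot_pair_hom : is_hom quot_pair.
Proof.
split.
- change (quot_pair (pclass 0 0) = 0); rewrite quot_pair_pclass; reflexivity.
- intros z z'; destruct (pclass_surj z) as [x [y ->]], (pclass_surj z') as [x' [y' ->]].
  rewrite pclass_add, !quot_pair_pclass; simpl; unfold padd; simpl.
  rewrite (qadd_class (ideal_rel_congruence HI)), (qadd_class (ideal_rel_congruence HJ)).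
  reflexivity.
Qed.

Lemma quot_pair_zero x y : quot_pair (pclass x y) = 0 <-> I x /\ J y.
Proof.
rewrite quot_pair_pclass, <- (ideal_class_0_iff HI), <- (ideal_class_0_iff HJ).
split; [intro H; exact (conj (f_equal fst H) (f_equal snd H)) | intros [-> ->]; reflexivity].
Qed.

Lemma I'_pclass x y : I' (pclass x y) <-> I x /\ J y.
Proof.
split.
- intros [s [Hs Hsxy]]; apply quot_pair_zero; rewrite <- Hsxy.
  unfold iota1; fold (pclass s 0); apply quot_pair_zero.
  split; [exact Hs | exists 0; exact (conj (order_ideal_0 HI) Hphi0)].
- intros [Hx Hy]; destruct (phi_inv_spec Hy) as [Hi He].
  exists (x + phi_inv y); split; [apply (proj2 HI); auto|].
  rewrite (proj2 iota1_hom), (iota1_iota2 Hi), He, <- pclass_split; reflexivity.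
Qed.

Lemma quot_pair_I' z : I' z -> quot_pair z = 0.
Proof.
destruct (pclass_surj z) as [x [y ->]]; rewrite I'_pclass; apply quot_pair_zero.
Qed.

Lemma I'_ideal : order_ideal I'.
Proof.
split; [exists (iota1 I phi 0); exists 0; exact (conj (order_ideal_0 HI) eq_refl)|].
intros z z'; destruct (pclass_surj z) as [x [y ->]], (pclass_surj z') as [x' [y' ->]].
rewrite pclass_add, !I'_pclass, (proj2 HI), (proj2 HJ); tauto.
Qed.

Lemma pclass_shift a b w w' :
  I w -> J w' -> pclass a b + iota1 I phi (w + phi_inv w') = pclass (a + w) (b + w').
Proof.
intros Hw Hw'; destruct (phi_inv_spec Hw') as [Hi He].
rewrite (proj2 iota1_hom), (iota1_iota2 Hi), He, <- pclass_split; apply pclass_add.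
Qed.

Definition quot_iso : ideal_quot I'_ideal -> QIJ := qlift quot_pair.

Let quot_pair_resp z z' : ideal_rel I' z z' -> quot_pair z = quot_pair z'.
Proof.
intros [u [v [Hu [Hv Huv]]]]; apply (f_equal quot_pair) in Huv.
rewrite !(proj2 quot_pair_hom), (quot_pair_I' Hu), (quot_pair_I' Hv), !madd0 in Huv; exact Huv.
Qed.

Lemma quot_iso_hom : is_hom quot_iso.
Proof. exact (qlift_hom _ quot_pair_resp quot_pair_hom). Qed.

Lemma quot_iso_bij : bijective quot_iso.
Proof.
pose proof (qlift_class (ideal_rel_congruence I'_ideal) quot_pair_resp) as Hcls.
split.
- intros A B; destruct (qclass_surj A) as [z ->]; destruct (qclass_surj B) as [z' ->].
  destruct (pclass_surj z) as [x [y ->]], (pclass_surj z') as [x' [y' ->]].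
  unfold quot_iso; rewrite !Hcls, !quot_pair_pclass; intro E.
  destruct (qclass_inv (ideal_rel_congruence HI) (f_equal fst E)) as [u [v [Hu [Hv Exu]]]].
  destruct (qclass_inv (ideal_rel_congruence HJ) (f_equal snd E)) as [u' [v' [Hu' [Hv' Eyu]]]].
  apply (qclass_eq (ideal_rel_congruence I'_ideal)).
  exists (iota1 I phi (u + phi_inv u')), (iota1 I phi (v + phi_inv v')).
  assert (Hshift : forall w w', I w -> J w' -> I' (iota1 I phi (w + phi_inv w'))).
  { intros w w' Hw Hw'; exists (w + phi_inv w'); split; [|reflexivity].
    apply (proj2 HI); split; [exact Hw | apply phi_inv_spec, Hw']. }
  split; [auto | split; [auto |]].
  rewrite !pclass_shift, Exu, Eyu by assumption; reflexivity.
- intros [A B]; destruct (qclass_surj A) as [x ->], (qclass_surj B) as [y ->].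
  exists (qclass (ideal_rel I') (pclass x y)).
  unfold quot_iso; rewrite Hcls, quot_pair_pclass; reflexivity.
Qed.

Section Embedding.
Variables (Q : cmonoid) (th1 : M -> Q) (th2 : N -> Q).
Hypotheses (HQr : refinement Q) (Hth1 : is_hom th1) (Hth2 : is_hom th2).
Hypotheses (Ith1 : injective th1) (Ith2 : injective th2).
Hypothesis Hc : forall s, I s -> th1 s = th2 (phi s).
Hypothesis Hmeet : forall q, range th1 q -> range th2 q -> image th1 I q.
Hypotheses (R1 : order_ideal (range th1)) (R2 : order_ideal (range th2)).

(** Refining [th1 x + th2 y = th1 x' + th2 y'] yields a common part [m] of
    [x, x'] and [n] of [y, y']; the cross terms lie in [th1(M) ∩ th2(N)],
    hence come from elements [s1, s2] of [I]. *)
Lemma embedding_decomposition x y x' y' :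
  th1 x + th2 y = th1 x' + th2 y' ->
  exists m n s1 s2, I s1 /\ I s2 /\
    x = m + s1 /\ x' = m + s2 /\ y = phi s2 + n /\ y' = phi s1 + n.
Proof.
intro E; destruct (HQr E) as [a11 [a12 [a21 [a22 [E1 [E2 [E3 E4]]]]]]].
assert (r1 : range th1 (a11 + a12)) by (exists x; auto).
assert (r3 : range th1 (a11 + a21)) by (exists x'; auto).
assert (r2 : range th2 (a21 + a22)) by (exists y; auto).
assert (r4 : range th2 (a12 + a22)) by (exists y'; auto).
apply (proj2 R1) in r1, r3; apply (proj2 R2) in r2, r4.
destruct (Hmeet (proj2 r1) (proj1 r4)) as [s1 [Is1 Hs1]].
destruct (Hmeet (proj2 r3) (proj1 r2)) as [s2 [Is2 Hs2]].
destruct (proj1 r1) as [m Hm], (proj2 r2) as [n Hn].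
exists m, n, s1, s2; repeat split; try assumption; [apply Ith1 | apply Ith1 | apply Ith2 | apply Ith2].
- rewrite (proj2 Hth1), Hm, Hs1; exact E1.
- rewrite (proj2 Hth1), Hm, Hs2; exact E3.
- rewrite (proj2 Hth2), Hn, <- (Hc Is2), Hs2; exact E2.
- rewrite (proj2 Hth2), Hn, <- (Hc Is1), Hs1; exact E4.
Qed.

Lemma copair_embedding_inj : injective (copair th1 th2).
Proof.
intros z z'; destruct (pclass_surj z) as [x [y ->]], (pclass_surj z') as [x' [y' ->]].
rewrite !(copair_pclass Hth1 Hth2 Hc); intro E.
destruct (embedding_decomposition E) as [m [n [s1 [s2 [Is1 [Is2 [-> [-> [-> ->]]]]]]]]].
rewrite !pclass_move by assumption; rewrite !maddA, (maddC (phi s1)); reflexivity.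
Qed.

End Embedding.

End Pushout.

Theorem mainTheorem8
  (M N : cmonoid) (HMc : conical M) (HNc : conical N)
  (I : M -> Prop) (HI : order_ideal I)
  (phi : M -> N)
  (Hphi0 : phi 0%mon = 0%mon)
  (HphiD : forall s t, I s -> I t -> phi (s + t)%mon = (phi s + phi t)%mon)
  (Hphi_inj : forall s t, I s -> I t -> phi s = phi t -> s = t)
  (HJ : order_ideal (image phi I)) :
  (* (1) pushout in the category of (abelian) monoids *)
  (is_hom (iota1 I phi) /\ is_hom (iota2 I phi) /\
   (forall s, I s -> iota1 I phi s = iota2 I phi (phi s)) /\
   (forall (Q : cmonoid) (f : M -> Q) (g : N -> Q),
      is_hom f -> is_hom g -> (forall s, I s -> f s = g (phi s)) ->
      (exists h : pushout I phi -> Q,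
         is_hom h /\ (forall x, h (iota1 I phi x) = f x) /\
         (forall y, h (iota2 I phi y) = g y)) /\
      (forall h h' : pushout I phi -> Q,
         is_hom h -> (forall x, h (iota1 I phi x) = f x) ->
         (forall y, h (iota2 I phi y) = g y) ->
         is_hom h' -> (forall x, h' (iota1 I phi x) = f x) ->
         (forall y, h' (iota2 I phi y) = g y) ->
         forall z, h z = h' z))) /\
  (* (2) *)
  (injective (iota1 I phi) /\ injective (iota2 I phi)) /\
  (* (3) *)
  ((forall z, image (iota1 I phi) I z <->
              image (iota2 I phi) (image phi I) z) /\
   exists HI' : order_ideal (image (iota1 I phi) I),
   exists h : ideal_quot HI' -> prod_monoid (ideal_quot HI) (ideal_quot HJ),
     is_hom h /\ bijective h) /\
  (* (4) *)
  (forall (Q : cmonoid) (th1 : M -> Q) (th2 : N -> Q),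
     conical Q -> refinement Q ->
     is_hom th1 -> is_hom th2 -> injective th1 -> injective th2 ->
     (forall s, I s -> th1 s = th2 (phi s)) ->
     (forall q, (range th1 q /\ range th2 q) <-> image th1 I q) ->
     (forall q, image th1 I q <-> image th2 (image phi I) q) ->
     order_ideal (range th1) -> order_ideal (range th2) ->
     exists iota : pushout I phi -> Q,
       is_hom iota /\ injective iota /\
       (forall x, th1 x = iota (iota1 I phi x)) /\
       (forall y, th2 y = iota (iota2 I phi y))).
Proof.
split; [|split; [|split]].
-
  split; [apply iota1_hom | split; [apply iota2_hom | split; [apply iota1_iota2 |]]].
  intros Q f g Hf Hg Hfg; split.
  + exists (copair f g); split; [exact (copair_hom Hf Hg Hfg) | split].
    * exact (copair_iota1 Hf Hg Hfg).
    * exact (copair_iota2 Hf Hg Hfg).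
  + intros h h' Hh Hh1 Hh2 Hh' Hh'1 Hh'2.
    apply pushout_hom_unique; trivial; congruence.
-
  split; [exact (iota1_inj HI HJ Hphi0 HphiD Hphi_inj) | exact (iota2_inj HI Hphi0 HphiD)].
-
  split; [apply I'_iota2 |].
  exists (I'_ideal HI HJ Hphi0), (quot_iso (HI:=HI) (HJ:=HJ) (Hphi0:=Hphi0)).
  split; [exact (quot_iso_hom HI HJ Hphi0) | exact (quot_iso_bij HI HJ Hphi0)].
-
  intros Q th1 th2 _ HQr Hth1 Hth2 Ith1 Ith2 Hc Hmeet _ R1 R2.
  exists (copair th1 th2); split; [exact (copair_hom Hth1 Hth2 Hc) | split].
  + exact (copair_embedding_inj HQr Hth1 Hth2 Ith1 Ith2 Hc
             (fun q H1 H2 => proj1 (Hmeet q) (conj H1 H2)) R1 R2).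
  + split; intro; symmetry; [exact (copair_iota1 Hth1 Hth2 Hc _) | exact (copair_iota2 Hth1 Hth2 Hc _)].
Qed.
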